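(* Let $I=[0,1]$ with the metric $\mathrm{d}(x,y)=|x-y|$ and let $\mathrm{Diff}^1(I)$ be the group of $C^1$ diffeomorphisms of $I$. On $\mathrm{Diff}^1(I)$ the metric $\mathrm{d}_W$ defines the $C^1$ topology, i.e. the topology of the metric $\mathrm{d}_{C^0}(f,g)+\mathrm{d}_{C^0}(f',g')$.
   Context: $\mathrm{d}_{C^0}(f,g)=\max_{x}|f(x)-g(x)|+\max_x|f^{-1}(x)-g^{-1}(x)|$ (for the derivatives, $\mathrm{d}_{C^0}(f',g')$ is understood as the uniform distance $\max_x|f'(x)-g'(x)|$). $\mathrm{d}'_W(f,g)=\sup_{x\ne y}\frac{||f(x)-f(y)|-|g(x)-g(y)||}{|x-y|}$ and $\mathrm{d}_W(f,g)=\mathrm{d}_{C^0}(f,g)+\mathrm{d}'_W(f,g)+\mathrm{d}'_W(f^{-1},g^{-1})$. *)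

From Stdlib Require Import Reals Lra ClassicalEpsilon.
Open Scope R_scope.

Definition inI (x : R) : Prop := 0 <= x <= 1.

(* Supremum of a set of reals (classical choice of a least upper bound;
   for the sets used below it always exists). *)
Definition Rsup (E : R -> Prop) : R :=
  epsilon (inhabits 0) (fun s => is_lub E s).

(* f has derivative l at x relative to I (one-sided at the endpoints). *)
Definition derivI (f : R -> R) (x l : R) : Prop :=
  limit1_in (fun y => (f y - f x) / (y - x)) (fun y => inI y /\ y <> x) l x.

Definition contI (h : R -> R) (x : R) : Prop :=
  limit1_in h inI (h x) x.

Definition C1I (f df : R -> R) : Prop :=
  (forall x, inI x -> derivI f x (df x)) /\ (forall x, inI x -> contI df x).

(* An element of Diff^1(I): a bijection f of I with inverse finv, both C^1
   on I, together with their derivatives (unique on I). *)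
Record Diff1 : Type := mkDiff1 {
  dfun : R -> R;
  dinv : R -> R;
  dder : R -> R;
  dinvder : R -> R;
  d_maps : forall x, inI x -> inI (dfun x);
  d_inv_maps : forall y, inI y -> inI (dinv y);
  d_inv_l : forall x, inI x -> dinv (dfun x) = x;
  d_inv_r : forall y, inI y -> dfun (dinv y) = y;
  d_C1 : C1I dfun dder;
  d_inv_C1 : C1I dinv dinvder
}.

Definition unif (f g : R -> R) : R :=
  Rsup (fun r => exists x, inI x /\ r = Rabs (f x - g x)).

Definition dC0 (f g : Diff1) : R :=
  unif (dfun f) (dfun g) + unif (dinv f) (dinv g).

Definition dW' (f g : R -> R) : R :=
  Rsup (fun r => exists x y, inI x /\ inI y /\ x <> y /\
          r = Rabs (Rabs (f x - f y) - Rabs (g x - g y)) / Rabs (x - y)).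

Definition dW (f g : Diff1) : R :=
  dC0 f g + dW' (dfun f) (dfun g) + dW' (dinv f) (dinv g).

Definition dC1 (f g : Diff1) : R :=
  dC0 f g + unif (dder f) (dder g).

(* If d_W(f,g) < 1 then |f(0) - g(0)| < 1, so f and g both fix or both swap
   the endpoints and f', g' have the same constant sign; then
   |f' - g'| = ||f'| - |g'||, and the latter is a limit of the quotients whose
   supremum is d'_W(f,g).  Hence d_C1 <= d_W near f.
   Conversely, the mean value theorem applied to f - g gives
   d'_W(f,g) <= |f' - g'|_oo.  For the inverses,
   (f^-1)' - (g^-1)' = (f^-1)'(g^-1)'(g' o g^-1 - f' o f^-1): the first two
   factors are bounded because f' is bounded away from 0 (and so is g' when
   C^1-close to f'), and the last is small by the uniform continuity of f'
   since f^-1 and g^-1 are C^0-close. *)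

From Stdlib Require Import Reals Lra ClassicalEpsilon.
Open Scope R_scope.

Lemma inI_0 : inI 0. Proof. unfold inI; lra. Qed.
Lemma inI_1 : inI 1. Proof. unfold inI; lra. Qed.

Lemma Rdiv_le_of_le_mult u c B : 0 < c -> u <= B * c -> u / c <= B.
Proof.
  intros Hc H. apply Rmult_le_reg_r with c; [exact Hc|]. unfold Rdiv.
  rewrite Rmult_assoc, Rinv_l by lra. lra.
Qed.

Lemma Rabs_Rabs_div_minus a b c : c <> 0 ->
  Rabs (Rabs (a / c) - Rabs (b / c)) = Rabs (Rabs a - Rabs b) / Rabs c.
Proof.
  intros Hc. unfold Rdiv. rewrite !Rabs_mult, !Rabs_inv, <- Rmult_minus_distr_r.
  rewrite Rabs_mult, Rabs_inv, Rabs_Rabsolu. reflexivity.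
Qed.

Lemma Rabs_minus_same_sign a b : 0 < a * b -> Rabs (a - b) = Rabs (Rabs a - Rabs b).
Proof.
  intros Hab. destruct (Rlt_or_le 0 a).
  - assert (0 < b) by nra. rewrite (Rabs_right a), (Rabs_right b); lra.
  - assert (b < 0) by nra. rewrite (Rabs_left1 a), (Rabs_left b) by lra.
    rewrite <- Rabs_Ropp. f_equal. ring.
Qed.

(* Extending maps of I by [h (clamp x)] lets us use the Stdlib theorems on
   continuity and derivability over R. *)
Definition clamp x := Rmin 1 (Rmax 0 x).

Lemma clamp_inI x : inI (clamp x).
Proof. unfold clamp, inI, Rmin, Rmax; repeat destruct Rle_dec; lra. Qed.

Lemma clamp_id x : inI x -> clamp x = x.
Proof. unfold clamp, inI, Rmin, Rmax; intros; repeat destruct Rle_dec; lra. Qed.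

Lemma clamp_1lipschitz x y : Rabs (clamp x - clamp y) <= Rabs (x - y).
Proof.
  unfold clamp, Rmin, Rmax; repeat destruct Rle_dec; unfold Rabs;
  repeat destruct Rcase_abs; lra.
Qed.

Lemma continuity_clamp h :
  (forall x, inI x -> contI h x) -> continuity (fun y => h (clamp y)).
Proof.
  intros Hc x e He.
  destruct (Hc (clamp x) (clamp_inI x) e He) as [d [Hd Hy]].
  exists d; split; [exact Hd|]. intros y [_ Hyx]. apply Hy. split.
  - apply clamp_inI.
  - eapply Rle_lt_trans; [apply clamp_1lipschitz | exact Hyx].
Qed.

Lemma limit1_in_ext h k D l x :
  (forall z, D z -> h z = k z) -> limit1_in h D l x -> limit1_in k D l x.
Proof.
  intros Hhk Hh e He. destruct (Hh e He) as [d [Hd Hz]].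
  exists d; split; [exact Hd|]. intros z [Dz Hzx]. rewrite <- Hhk by exact Dz. auto.
Qed.

Lemma limit1_in_subdomain h D D' l x :
  (forall z, D' z -> D z) -> limit1_in h D l x -> limit1_in h D' l x.
Proof.
  intros HD Hh e He. destruct (Hh e He) as [d [Hd Hz]].
  exists d; split; [exact Hd|]. intros z [Dz Hzx]. auto.
Qed.

Lemma limit1_in_Rabs h D l x :
  limit1_in h D l x -> limit1_in (fun z => Rabs (h z)) D (Rabs l) x.
Proof.
  intros Hh e He. destruct (Hh e He) as [d [Hd Hz]].
  exists d; split; [exact Hd|]. intros z Hz'.
  eapply Rle_lt_trans; [apply Rabs_triang_inv2 | exact (Hz z Hz')].
Qed.

Lemma limit1_in_le h D l x B :
  adhDa D x -> (forall z, D z -> h z <= B) -> limit1_in h D l x -> l <= B.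
Proof.
  intros Hadh HB Hh. apply Rnot_lt_le. intros HBl.
  destruct (Hh (l - B)) as [d [Hd Hz]]; [lra|].
  destruct (Hadh d Hd) as [z [Dz Hzx]].
  specialize (Hz z (conj Dz Hzx)). specialize (HB z Dz).
  simpl in Hz. unfold Rdist in Hz. unfold Rabs in Hz. destruct Rcase_abs; lra.
Qed.

Lemma limit1_in_punctured h D x :
  limit1_in h (fun z => D z /\ z <> x) (h x) x -> limit1_in h D (h x) x.
Proof.
  intros Hh e He. destruct (Hh e He) as [d [Hd Hz]].
  exists d; split; [exact Hd|]. intros z [Dz Hzx].
  destruct (Req_dec z x) as [->|Hne].
  - simpl. unfold Rdist. rewrite Rminus_diag, Rabs_R0. exact He.
  - apply Hz. auto.
Qed.

Definition puncI x z := inI z /\ z <> x.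

Lemma adhDa_puncI x : inI x -> adhDa (puncI x) x.
Proof.
  intros Hx d Hd. set (t := Rmin (d/2) (1/2)).
  assert (Ht1 : t <= d/2) by apply Rmin_l. assert (Ht2 : t <= 1/2) by apply Rmin_r.
  assert (Ht0 : 0 < t) by (apply Rmin_glb_lt; lra).
  unfold puncI, inI in *. simpl. unfold Rdist.
  destruct (Rle_dec x (1/2)).
  - exists (x + t). replace (x + t - x) with t by ring.
    rewrite Rabs_right; repeat split; lra.
  - exists (x - t). replace (x - t - x) with (- t) by ring.
    rewrite Rabs_Ropp, Rabs_right; repeat split; lra.
Qed.

Definition diffquot (f : R -> R) x z := (f z - f x) / (z - x).

Lemma derivI_contI f x l : derivI f x l -> contI f x.
Proof.
  intros Hf. apply limit1_in_punctured.
  apply (limit1_in_ext (fun z => diffquot f x z * (z - x) + f x)).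
  { intros z [_ Hzx]. unfold diffquot. field. lra. }
  assert (Hlim : limit1_in (fun z => diffquot f x z * (z - x) + f x) (puncI x)
    (l * (x - x) + f x) x).
  { apply limit_plus; [apply limit_mul | exact (limit_free (fun _ => f x) _ x x)].
    - exact Hf.
    - apply limit_minus; [apply lim_x | exact (limit_free (fun _ => x) _ x x)]. }
  rewrite Rminus_diag, Rmult_0_r, Rplus_0_l in Hlim. exact Hlim.
Qed.

Lemma derivI_minus f g x a b :
  derivI f x a -> derivI g x b -> derivI (fun y => f y - g y) x (a - b).
Proof.
  intros Hf Hg. apply (limit1_in_ext (fun z => diffquot f x z - diffquot g x z)).
  { intros z [_ Hzx]. unfold diffquot. field. lra. }
  exact (limit_minus _ _ _ _ _ _ Hf Hg).
Qed.

Lemma derivI_interior f x l : 0 < x < 1 -> derivI f x l ->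
  derivable_pt_lim (fun y => f (clamp y)) x l.
Proof.
  intros Hx Hf e He. destruct (Hf e He) as [d [Hd Hz]].
  assert (Hp : 0 < Rmin d (Rmin x (1 - x))) by (repeat apply Rmin_glb_lt; lra).
  exists (mkposreal _ Hp). simpl. intros h Hh0 Hh.
  pose proof (Rmin_l d (Rmin x (1 - x))). pose proof (Rmin_r d (Rmin x (1 - x))).
  pose proof (Rmin_l x (1 - x)). pose proof (Rmin_r x (1 - x)).
  assert (Hh' : - Rmin d (Rmin x (1 - x)) < h < Rmin d (Rmin x (1 - x))).
  { unfold Rabs in Hh; destruct Rcase_abs in Hh; lra. }
  rewrite !clamp_id by (unfold inI; lra).
  specialize (Hz (x + h)). simpl in Hz. unfold Rdist in Hz.
  replace (x + h - x) with h in Hz by ring.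
  apply Hz. unfold inI. repeat split; lra.
Qed.

Lemma derivI_MVT h dh a b : (forall x, inI x -> derivI h x (dh x)) ->
  inI a -> inI b -> a < b ->
  exists c, a < c < b /\ h b - h a = dh c * (b - a).
Proof.
  intros Hd Ha Hb Hab. set (H := fun y => h (clamp y)).
  assert (Hlim : forall c, a < c < b -> derivable_pt_lim H c (dh c)).
  { intros c Hc. apply derivI_interior; [|apply Hd]; unfold inI in *; lra. }
  assert (pr1 : forall c, a < c < b -> derivable_pt H c)
    by (intros c Hc; exists (dh c); exact (Hlim c Hc)).
  assert (pr2 : forall c, a < c < b -> derivable_pt id c)
    by (intros; apply derivable_pt_id).
  assert (HcH : continuity H).
  { apply continuity_clamp. intros x Hx. exact (derivI_contI _ _ _ (Hd x Hx)). }
  destruct (MVT H id a b pr1 pr2 Hab (fun c _ => HcH c)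
    (fun c _ => derivable_continuous_pt _ _ (derivable_pt_id c))) as [c [P HP]].
  exists c; split; [exact P|].
  rewrite (derive_pt_eq_0 H c (dh c) (pr1 c P) (Hlim c P)) in HP.
  rewrite (derive_pt_eq_0 id c 1 (pr2 c P) (derivable_pt_lim_id c)) in HP.
  unfold H, id in HP. rewrite !clamp_id in HP by assumption. lra.
Qed.

Definition lipschitzI (f : R -> R) K :=
  forall x y, inI x -> inI y -> Rabs (f x - f y) <= K * Rabs (x - y).

Lemma lipschitzI_of_derivI h dh K : (forall x, inI x -> derivI h x (dh x)) ->
  (forall x, inI x -> Rabs (dh x) <= K) -> lipschitzI h K.
Proof.
  intros Hd HK.
  assert (Hlt : forall x y, inI x -> inI y -> x < y ->
    Rabs (h x - h y) <= K * Rabs (x - y)).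
  { intros x y Hx Hy Hxy. destruct (derivI_MVT h dh x y Hd Hx Hy Hxy) as [c [Hc Heq]].
    rewrite Rabs_minus_sym, Heq, (Rabs_minus_sym x y), Rabs_mult.
    apply Rmult_le_compat_r; [apply Rabs_pos|]. apply HK. unfold inI in *; lra. }
  intros x y Hx Hy. destruct (Rtotal_order x y) as [Hl|[->|Hg]].
  - auto.
  - rewrite !Rminus_diag, Rabs_R0. pose proof (HK y Hy) as HKy.
    pose proof (Rabs_pos (dh y)). lra.
  - rewrite Rabs_minus_sym, (Rabs_minus_sym x y). auto.
Qed.

Definition boundedI (h : R -> R) M := forall x, inI x -> Rabs (h x) <= M.

Lemma C1I_deriv_bounded f df : C1I f df -> exists M, 0 < M /\ boundedI df M.
Proof.
  intros [_ Hc].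
  pose proof (continuity_clamp df Hc) as Hcc.
  destruct (continuity_ab_maj (fun y => Rabs (df (clamp y))) 0 1) as [m [Hm _]]; [lra| |].
  { intros c _.
    exact (continuity_pt_comp (fun y => df (clamp y)) Rabs c (Hcc c) (Rcontinuity_abs _)). }
  exists (Rabs (df (clamp m)) + 1). split; [pose proof (Rabs_pos (df (clamp m))); lra|].
  intros x Hx. specialize (Hm x Hx). rewrite clamp_id in Hm by exact Hx. lra.
Qed.

Lemma C1I_lipschitzI f df : C1I f df -> exists M, lipschitzI f M.
Proof.
  intros Hf. destruct (C1I_deriv_bounded f df Hf) as [M [_ HM]].
  exists M. exact (lipschitzI_of_derivI f df M (proj1 Hf) HM).
Qed.

Lemma C1I_deriv_unif_cont f df : C1I f df -> forall e, e > 0 -> exists w, w > 0 /\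
  forall x y, inI x -> inI y -> Rabs (x - y) < w -> Rabs (df x - df y) < e.
Proof.
  intros [_ Hc] e He.
  destruct (Heine (fun y => df (clamp y)) inI (compact_P3 0 1)
    (fun x _ => continuity_clamp df Hc x) (mkposreal e He)) as [w Hw].
  exists w. split; [apply cond_pos|]. intros x y Hx Hy Hxy.
  specialize (Hw x y Hx Hy Hxy). simpl in Hw. rewrite !clamp_id in Hw by assumption.
  exact Hw.
Qed.

Lemma contI_sign_const d : (forall x, inI x -> contI d x) ->
  (forall x, inI x -> d x <> 0) -> forall x, inI x -> 0 < d 0 * d x.
Proof.
  intros Hc Hn x Hx. apply Rnot_le_lt. intros Hle.
  destruct (IVT_cor (fun y => d (clamp y)) 0 x (continuity_clamp d Hc))
    as [z [Hz Hdz]].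
  - unfold inI in Hx; lra.
  - rewrite !clamp_id by (exact inI_0 || exact Hx). exact Hle.
  - exact (Hn (clamp z) (clamp_inI z) Hdz).
Qed.

Lemma Diff1_inj (h : Diff1) x z : inI x -> inI z -> dfun h z = dfun h x -> z = x.
Proof.
  intros Hx Hz E. rewrite <- (d_inv_l h z Hz), <- (d_inv_l h x Hx), E. reflexivity.
Qed.

Lemma Diff1_chain (h : Diff1) x : inI x -> dder h x * dinvder h (dfun h x) = 1.
Proof.
  intros Hx. set (f := dfun h). set (g := dinv h).
  assert (Hfx : inI (f x)) by exact (d_maps h x Hx).
  assert (Hf : derivI f x (dder h x)) by exact (proj1 (d_C1 h) x Hx).
  assert (Hg : derivI g (f x) (dinvder h (f x))) by exact (proj1 (d_inv_C1 h) _ Hfx).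
  assert (Hcf : limit1_in f (puncI x) (f x) x).
  { apply (limit1_in_subdomain _ inI); [intros z []; assumption|].
    exact (derivI_contI f x _ Hf). }
  assert (Hgf : limit1_in (fun z => diffquot g (f x) (f z)) (puncI x)
    (dinvder h (f x)) x).
  { apply (limit1_in_subdomain _ (Dgf (puncI x) (puncI (f x)) f)).
    - intros z [Hz Hzx]. split; [split; assumption|split; [apply d_maps; assumption|]].
      intros E. exact (Hzx (Diff1_inj h x z Hx Hz E)).
    - exact (limit_comp _ _ _ _ _ _ _ Hcf Hg). }
  (* On the punctured interval the two difference quotients are reciprocal. *)
  assert (Hone : limit1_in (fun _ => 1) (puncI x) (dder h x * dinvder h (f x)) x).
  { apply (limit1_in_ext (fun z => diffquot f x z * diffquot g (f x) (f z))).
    - intros z [Hz Hzx]. assert (Hfz : f z <> f x).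
      { intros E. exact (Hzx (Diff1_inj h x z Hx Hz E)). }
      unfold diffquot, g, f in *. rewrite !d_inv_l by assumption. field. split; lra.
    - exact (limit_mul _ _ _ _ _ _ Hf Hgf). }
  symmetry.
  exact (single_limit _ _ _ _ _ (adhDa_puncI x Hx) (limit_free (fun _ => 1) _ x x) Hone).
Qed.

Lemma Diff1_chain_inv (h : Diff1) y : inI y -> dder h (dinv h y) * dinvder h y = 1.
Proof.
  intros Hy. rewrite <- (d_inv_r h y Hy) at 2. exact (Diff1_chain h _ (d_inv_maps h y Hy)).
Qed.

Lemma Diff1_deriv_sign (h : Diff1) x : inI x -> 0 < dder h 0 * dder h x.
Proof.
  apply contI_sign_const; [exact (proj2 (d_C1 h))|].
  intros z Hz E. pose proof (Diff1_chain h z Hz) as C. rewrite E in C. lra.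
Qed.

Lemma Diff1_increment_sign (h : Diff1) c : inI c -> 0 < c ->
  0 < dder h 0 * (dfun h c - dfun h 0).
Proof.
  intros Hc Hc0.
  destruct (derivI_MVT (dfun h) (dder h) 0 c (proj1 (d_C1 h)) inI_0 Hc Hc0)
    as [t [Ht ->]].
  pose proof (Diff1_deriv_sign h t ltac:(unfold inI in *; lra)). nra.
Qed.

Lemma Diff1_orientation (h : Diff1) :
  (0 < dder h 0 /\ dfun h 0 = 0) \/ (dder h 0 < 0 /\ dfun h 0 = 1).
Proof.
  pose proof (d_maps h 0 inI_0) as H0. unfold inI in H0.
  destruct (Rtotal_order (dder h 0) 0) as [Hneg|[Hzero|Hpos]].
  - right. split; [exact Hneg|].
    pose proof (d_inv_maps h 1 inI_1) as Hc. pose proof (d_inv_r h 1 inI_1) as Hr.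
    destruct (Req_dec (dinv h 1) 0) as [E|Ne]; [rewrite E in Hr; exact Hr|].
    pose proof (Diff1_increment_sign h _ Hc ltac:(unfold inI in Hc; lra)).
    rewrite Hr in *. nra.
  - pose proof (Diff1_deriv_sign h 0 inI_0). rewrite Hzero in *. lra.
  - left. split; [exact Hpos|].
    pose proof (d_inv_maps h 0 inI_0) as Hc. pose proof (d_inv_r h 0 inI_0) as Hr.
    destruct (Req_dec (dinv h 0) 0) as [E|Ne]; [rewrite E in Hr; exact Hr|].
    pose proof (Diff1_increment_sign h _ Hc ltac:(unfold inI in Hc; lra)).
    rewrite Hr in *. nra.
Qed.

Lemma Diff1_deriv_same_sign (f g : Diff1) : Rabs (dfun f 0 - dfun g 0) < 1 ->
  forall x, inI x -> 0 < dder f x * dder g x.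
Proof.
  intros Hfg x Hx.
  assert (H0 : 0 < dder f 0 * dder g 0).
  { destruct (Diff1_orientation f) as [[Pf Ef]|[Pf Ef]];
      destruct (Diff1_orientation g) as [[Pg Eg]|[Pg Eg]]; rewrite ?Ef, ?Eg in Hfg;
      try nra; exfalso; unfold Rabs in Hfg; destruct Rcase_abs in Hfg; lra. }
  assert (P : 0 < (dder f 0 * dder g 0) * (dder f x * dder g x)).
  { replace (dder f 0 * dder g 0 * (dder f x * dder g x))
      with ((dder f 0 * dder f x) * (dder g 0 * dder g x)) by ring.
    apply Rmult_lt_0_compat; apply Diff1_deriv_sign; exact Hx. }
  nra.
Qed.

Lemma Rsup_ub (E : R -> Prop) r : (exists B, forall s, E s -> s <= B) -> E r -> r <= Rsup E.
Proof.
  intros [B HB] Hr. unfold Rsup.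
  assert (Hlub : exists m, is_lub E m).
  { destruct (completeness E) as [m Hm]; [exists B|exists r|exists m]; assumption. }
  exact (proj1 (epsilon_spec (inhabits 0) _ Hlub) r Hr).
Qed.

Lemma Rsup_lub (E : R -> Prop) B : (exists r, E r) -> (forall s, E s -> s <= B) -> Rsup E <= B.
Proof.
  intros Hne HB. unfold Rsup.
  assert (Hlub : exists m, is_lub E m).
  { destruct (completeness E) as [m Hm]; [exists B|assumption|exists m]; assumption. }
  exact (proj2 (epsilon_spec (inhabits 0) _ Hlub) B HB).
Qed.

Lemma boundedI_of_maps h : (forall x, inI x -> inI (h x)) -> boundedI h 1.
Proof. intros Hh x Hx. specialize (Hh x Hx). unfold inI in Hh. rewrite Rabs_right; lra. Qed.

Lemma unif_ub f g Mf Mg x : boundedI f Mf -> boundedI g Mg -> inI x ->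
  Rabs (f x - g x) <= unif f g.
Proof.
  intros Hf Hg Hx. apply Rsup_ub; [|exists x; split; auto].
  exists (Mf + Mg). intros s [z [Hz ->]].
  eapply Rle_trans; [apply Rabs_triang|]. rewrite Rabs_Ropp.
  specialize (Hf z Hz). specialize (Hg z Hz). lra.
Qed.

Lemma unif_lub f g B : (forall x, inI x -> Rabs (f x - g x) <= B) -> unif f g <= B.
Proof.
  intros HB. apply Rsup_lub; [exists (Rabs (f 0 - g 0)), 0; split; [exact inI_0|auto]|].
  intros s [z [Hz ->]]. auto.
Qed.

Lemma unif_nonneg f g Mf Mg : boundedI f Mf -> boundedI g Mg -> 0 <= unif f g.
Proof.
  intros Hf Hg. eapply Rle_trans; [apply Rabs_pos | exact (unif_ub f g Mf Mg 0 Hf Hg inI_0)].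
Qed.

Definition dW_quot (f g : R -> R) x y :=
  Rabs (Rabs (f x - f y) - Rabs (g x - g y)) / Rabs (x - y).

Lemma dW_quot_le_lipschitz f g Kf Kg x y : lipschitzI f Kf -> lipschitzI g Kg ->
  inI x -> inI y -> x <> y -> dW_quot f g x y <= Kf + Kg.
Proof.
  intros Hf Hg Hx Hy Hxy. assert (Hd : 0 < Rabs (x - y)) by (apply Rabs_pos_lt; lra).
  unfold dW_quot. apply Rdiv_le_of_le_mult; [exact Hd|].
  specialize (Hf x y Hx Hy). specialize (Hg x y Hx Hy).
  eapply Rle_trans; [apply Rabs_triang|].
  rewrite Rabs_Ropp, !Rabs_Rabsolu. lra.
Qed.

Lemma dW_quot_le_lipschitz_diff f g K x y : lipschitzI (fun z => f z - g z) K ->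
  inI x -> inI y -> x <> y -> dW_quot f g x y <= K.
Proof.
  intros H Hx Hy Hxy. unfold dW_quot. apply Rdiv_le_of_le_mult; [apply Rabs_pos_lt; lra|].
  eapply Rle_trans; [apply Rabs_triang_inv2|].
  replace (f x - f y - (g x - g y)) with ((f x - g x) - (f y - g y)) by ring.
  exact (H x y Hx Hy).
Qed.

Lemma dW'_ub f g Kf Kg x y : lipschitzI f Kf -> lipschitzI g Kg ->
  inI x -> inI y -> x <> y -> dW_quot f g x y <= dW' f g.
Proof.
  intros Hf Hg Hx Hy Hxy. apply Rsup_ub; [|exists x, y; auto].
  exists (Kf + Kg). intros s [u [v [Hu [Hv [Huv ->]]]]].
  exact (dW_quot_le_lipschitz f g Kf Kg u v Hf Hg Hu Hv Huv).
Qed.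

Lemma dW'_lub f g B : (forall x y, inI x -> inI y -> x <> y -> dW_quot f g x y <= B) ->
  dW' f g <= B.
Proof.
  intros HB. apply Rsup_lub.
  - exists (dW_quot f g 0 1), 0, 1.
    split; [exact inI_0 | split; [exact inI_1 | split; [lra | reflexivity]]].
  - intros s [u [v [Hu [Hv [Huv ->]]]]]. exact (HB u v Hu Hv Huv).
Qed.

Lemma dW'_nonneg f g Kf Kg : lipschitzI f Kf -> lipschitzI g Kg -> 0 <= dW' f g.
Proof.
  intros Hf Hg. eapply Rle_trans; [|exact (dW'_ub f g Kf Kg 0 1 Hf Hg inI_0 inI_1 ltac:(lra))].
  unfold dW_quot. apply Rle_mult_inv_pos; [apply Rabs_pos|apply Rabs_pos_lt; lra].
Qed.

Lemma dW'_le_unif_deriv f df g dg : C1I f df -> C1I g dg -> dW' f g <= unif df dg.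
Proof.
  intros Hf Hg.
  destruct (C1I_deriv_bounded f df Hf) as [Mf [_ HMf]].
  destruct (C1I_deriv_bounded g dg Hg) as [Mg [_ HMg]].
  apply dW'_lub. intros x y Hx Hy Hxy. apply (dW_quot_le_lipschitz_diff f g _ x y); auto.
  apply (lipschitzI_of_derivI _ (fun z => df z - dg z)).
  - intros z Hz. exact (derivI_minus f g z _ _ (proj1 Hf z Hz) (proj1 Hg z Hz)).
  - intros z Hz. exact (unif_ub df dg Mf Mg z HMf HMg Hz).
Qed.

Lemma Rabs_deriv_dist_le_dW' f df g dg x : C1I f df -> C1I g dg -> inI x ->
  Rabs (Rabs (df x) - Rabs (dg x)) <= dW' f g.
Proof.
  intros Hf Hg Hx.
  destruct (C1I_lipschitzI f df Hf) as [Kf HKf].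
  destruct (C1I_lipschitzI g dg Hg) as [Kg HKg].
  apply (limit1_in_le (dW_quot f g x) (puncI x) _ x _ (adhDa_puncI x Hx)).
  { intros z [Hz Hzx]. exact (dW'_ub f g Kf Kg x z HKf HKg Hx Hz (not_eq_sym Hzx)). }
  apply (limit1_in_ext (fun z => Rabs (Rabs (diffquot f x z) - Rabs (diffquot g x z)))).
  - intros z [_ Hzx]. unfold diffquot, dW_quot.
    rewrite Rabs_Rabs_div_minus by lra.
    rewrite (Rabs_minus_sym (f z)), (Rabs_minus_sym (g z)), (Rabs_minus_sym z). reflexivity.
  - apply limit1_in_Rabs, limit_minus; apply limit1_in_Rabs;
      [exact (proj1 Hf x Hx) | exact (proj1 Hg x Hx)].
Qed.

Lemma dC1_le_dW (f g : Diff1) : dW f g < 1 -> dC1 f g <= dW f g.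
Proof.
  intros Hfg.
  destruct (C1I_lipschitzI _ _ (d_C1 f)) as [Kf HKf].
  destruct (C1I_lipschitzI _ _ (d_C1 g)) as [Kg HKg].
  destruct (C1I_lipschitzI _ _ (d_inv_C1 f)) as [Lf HLf].
  destruct (C1I_lipschitzI _ _ (d_inv_C1 g)) as [Lg HLg].
  pose proof (boundedI_of_maps _ (d_maps f)) as Bf.
  pose proof (boundedI_of_maps _ (d_maps g)) as Bg.
  pose proof (unif_nonneg _ _ _ _ Bf Bg).
  pose proof (unif_nonneg _ _ _ _ (boundedI_of_maps _ (d_inv_maps f))
    (boundedI_of_maps _ (d_inv_maps g))).
  pose proof (dW'_nonneg _ _ _ _ HKf HKg). pose proof (dW'_nonneg _ _ _ _ HLf HLg).
  assert (Hend : Rabs (dfun f 0 - dfun g 0) < 1).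
  { pose proof (unif_ub _ _ _ _ 0 Bf Bg inI_0). unfold dW, dC0 in Hfg. lra. }
  assert (Hder : unif (dder f) (dder g) <= dW' (dfun f) (dfun g)).
  { apply unif_lub. intros x Hx.
    rewrite Rabs_minus_same_sign by exact (Diff1_deriv_same_sign f g Hend x Hx).
    exact (Rabs_deriv_dist_le_dW' _ _ _ _ x (d_C1 f) (d_C1 g) Hx). }
  unfold dC1, dW. lra.
Qed.

Lemma Diff1_deriv_lower (h : Diff1) N : boundedI (dinvder h) N ->
  forall x, inI x -> 1 <= Rabs (dder h x) * N.
Proof.
  intros HN x Hx. pose proof (HN _ (d_maps h x Hx)) as Hb.
  assert (Hm : Rabs (dder h x) * Rabs (dinvder h (dfun h x)) = 1)
    by (rewrite <- Rabs_mult, Diff1_chain by exact Hx; apply Rabs_R1).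
  pose proof (Rabs_pos (dder h x)). nra.
Qed.

Lemma Diff1_inv_deriv_upper (h : Diff1) c : (forall x, inI x -> 1 <= Rabs (dder h x) * c) ->
  boundedI (dinvder h) c.
Proof.
  intros Hc y Hy. pose proof (Hc _ (d_inv_maps h y Hy)) as Hl.
  assert (Hm : Rabs (dder h (dinv h y)) * Rabs (dinvder h y) = 1)
    by (rewrite <- Rabs_mult, Diff1_chain_inv by exact Hy; apply Rabs_R1).
  pose proof (Rabs_pos (dder h (dinv h y))). pose proof (Rabs_pos (dinvder h y)). nra.
Qed.

Lemma dW'_inv_le (f g : Diff1) N M eta w : boundedI (dinvder f) N ->
  boundedI (dinvder g) M ->
  (forall x y, inI x -> inI y -> Rabs (x - y) < w -> Rabs (dder f x - dder f y) < eta) ->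
  unif (dinv f) (dinv g) < w ->
  dW' (dinv f) (dinv g) <= N * M * (eta + unif (dder f) (dder g)).
Proof.
  intros HN HM Hw HC0.
  destruct (C1I_deriv_bounded _ _ (d_C1 f)) as [Mf [_ HMf]].
  destruct (C1I_deriv_bounded _ _ (d_C1 g)) as [Mg [_ HMg]].
  apply dW'_lub. intros x y Hx Hy Hxy. apply (dW_quot_le_lipschitz_diff _ _ _ x y); auto.
  apply (lipschitzI_of_derivI _ (fun z => dinvder f z - dinvder g z)).
  { intros z Hz. exact (derivI_minus _ _ z _ _ (proj1 (d_inv_C1 f) z Hz)
      (proj1 (d_inv_C1 g) z Hz)). }
  intros z Hz.
  set (p := dinv f z). set (q := dinv g z).
  assert (Hp : inI p) by exact (d_inv_maps f z Hz).
  assert (Hq : inI q) by exact (d_inv_maps g z Hz).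
  assert (Hpq : Rabs (p - q) < w).
  { pose proof (unif_ub _ _ _ _ z (boundedI_of_maps _ (d_inv_maps f))
      (boundedI_of_maps _ (d_inv_maps g)) Hz). fold p q in H. lra. }
  pose proof (Hw p q Hp Hq Hpq) as Hfpq.
  pose proof (unif_ub _ _ _ _ q HMf HMg Hq) as Hfgq.
  pose proof (HN z Hz) as Hu. pose proof (HM z Hz) as Hv.
  pose proof (Diff1_chain_inv f z Hz) as Cf. pose proof (Diff1_chain_inv g z Hz) as Cg.
  fold p in Cf. fold q in Cg.
  set (a := dder f p) in *. set (b := dder g q) in *.
  set (u := dinvder f z) in *. set (v := dinvder g z) in *.
  assert (Euv : u - v = u * v * (b - a)).
  { transitivity (u * (b * v) - v * (a * u)); [rewrite Cf, Cg; ring | ring]. }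
  assert (Hba : Rabs (b - a) <= eta + unif (dder f) (dder g)).
  { replace (b - a) with ((dder f q - a) - (dder f q - b)) by ring.
    eapply Rle_trans; [apply Rabs_triang|]. rewrite Rabs_Ropp, (Rabs_minus_sym _ a).
    lra. }
  rewrite Euv, !Rabs_mult.
  pose proof (Rabs_pos u). pose proof (Rabs_pos v). pose proof (Rabs_pos (b - a)).
  apply Rmult_le_compat; [nra | assumption | apply Rmult_le_compat; lra | assumption].
Qed.

Lemma dC1_small_of_dW_small (f : Diff1) eps : eps > 0 -> exists delta, delta > 0 /\
  forall g : Diff1, dW f g < delta -> dC1 f g < eps.
Proof.
  intros He. exists (Rmin 1 eps). split; [apply Rmin_glb_lt; lra|].
  intros g Hg. pose proof (Rmin_l 1 eps). pose proof (Rmin_r 1 eps).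
  pose proof (dC1_le_dW f g ltac:(lra)). lra.
Qed.

Lemma Diff1_deriv_lower_stable (f g : Diff1) N : boundedI (dinvder f) N -> 0 < N ->
  unif (dder f) (dder g) <= / (2 * N) -> forall x, inI x -> 1 <= Rabs (dder g x) * (2 * N).
Proof.
  intros HN HN0 Hfg x Hx.
  destruct (C1I_deriv_bounded _ _ (d_C1 f)) as [Mf [_ HMf]].
  destruct (C1I_deriv_bounded _ _ (d_C1 g)) as [Mg [_ HMg]].
  pose proof (Diff1_deriv_lower f N HN x Hx).
  pose proof (unif_ub _ _ _ _ x HMf HMg Hx).
  pose proof (Rabs_triang_inv (dder f x) (dder g x)).
  assert (unif (dder f) (dder g) * N <= / 2).
  { apply (Rmult_le_compat_r N) in Hfg; [|lra].
    replace (/ (2 * N) * N) with (/ 2) in Hfg by (field; lra). exact Hfg. }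
  nra.
Qed.

Lemma dW_small_of_dC1_small (f : Diff1) eps : eps > 0 -> exists delta, delta > 0 /\
  forall g : Diff1, dC1 f g < delta -> dW f g < eps.
Proof.
  intros He.
  destruct (C1I_deriv_bounded _ _ (d_inv_C1 f)) as [N [HN0 HN]].
  set (eta := eps / (8 * N * N)).
  assert (Heta : eta > 0) by (unfold eta; apply Rdiv_lt_0_compat; nra).
  assert (HNeta : 4 * N * N * eta = eps / 2) by (unfold eta; field; lra).
  destruct (C1I_deriv_unif_cont _ _ (d_C1 f) eta Heta) as [w [Hw0 Hw]].
  set (delta := Rmin w (Rmin (/ (2 * N)) (Rmin eta (eps / 4)))).
  assert (Hinv : 0 < / (2 * N)) by (apply Rinv_0_lt_compat; lra).
  exists delta. split; [unfold delta; repeat apply Rmin_glb_lt; lra|].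
  assert (Dw : delta <= w) by apply Rmin_l.
  assert (DN : delta <= / (2 * N)) by (eapply Rle_trans; [apply Rmin_r | apply Rmin_l]).
  assert (Deta : delta <= eta)
    by (eapply Rle_trans; [apply Rmin_r|]; eapply Rle_trans; [apply Rmin_r | apply Rmin_l]).
  assert (Deps : delta <= eps / 4)
    by (eapply Rle_trans; [apply Rmin_r|]; eapply Rle_trans; [apply Rmin_r | apply Rmin_r]).
  intros g Hg.
  destruct (C1I_deriv_bounded _ _ (d_C1 f)) as [Mf [_ HMf]].
  destruct (C1I_deriv_bounded _ _ (d_C1 g)) as [Mg [_ HMg]].
  pose proof (unif_nonneg _ _ _ _ (boundedI_of_maps _ (d_maps f))
    (boundedI_of_maps _ (d_maps g))).
  pose proof (unif_nonneg _ _ _ _ (boundedI_of_maps _ (d_inv_maps f))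
    (boundedI_of_maps _ (d_inv_maps g))).
  unfold dC1, dC0 in Hg.
  set (e := unif (dder f) (dder g)) in *.
  assert (He0 : 0 <= e) by exact (unif_nonneg _ _ _ _ HMf HMg).
  assert (Hedelta : e < delta) by lra.
  assert (Hfun : dW' (dfun f) (dfun g) <= e)
    by exact (dW'_le_unif_deriv _ _ _ _ (d_C1 f) (d_C1 g)).
  assert (Hglow : forall x, inI x -> 1 <= Rabs (dder g x) * (2 * N))
    by (apply (Diff1_deriv_lower_stable f g N HN HN0); fold e; lra).
  pose proof (dW'_inv_le f g N (2 * N) eta w HN (Diff1_inv_deriv_upper g _ Hglow) Hw
    ltac:(lra)) as Hinvfun.
  fold e in Hinvfun.
  assert (N * (2 * N) * (eta + e) <= eps / 2) by nra.
  unfold dW, dC0. lra.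
Qed.

Theorem mainTheorem12 :
  forall f : Diff1,
    (forall eps, eps > 0 -> exists delta, delta > 0 /\
       forall g : Diff1, dW f g < delta -> dC1 f g < eps) /\
    (forall eps, eps > 0 -> exists delta, delta > 0 /\
       forall g : Diff1, dC1 f g < delta -> dW f g < eps).
Proof.
  intros f. split.
  - exact (dC1_small_of_dW_small f).
  - exact (dW_small_of_dC1_small f).
Qed.
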